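(* Let $m,n\ge 0$ be integers with $m-n\equiv 0\pmod 2$, put $N=m+n$, and let $1<r<\infty$. Then $$\left(\frac{2}{r+1}+\sum_{j=0}^{N-1}\frac{\binom{N}{j+1}^{r+1}-\binom{N}{j}^{r+1}}{(r+1)\left[\binom{N}{j+1}-\binom{N}{j}\right]}\right)^{1/r} \le 2^m\Big(\sum_{j=0}^{n}\binom{n}{j}^r\Big)^{1/r}.$$
   Context: Binomial coefficients have their usual meaning. *)

From mathcomp Require Import all_boot all_order all_algebra.
From mathcomp Require Import reals exp.

From mathcomp Require Import all_boot all_order all_algebra.
From mathcomp Require Import reals exp.
From mathcomp Require Import all_classical all_reals all_analysis.
From mathcomp Require Import ring lra.
Import Order.TTheory GRing.Theory Num.Theory.
Import numFieldNormedType.Exports.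
Local Open Scope classical_set_scope.
Local Open Scope ring_scope.

(* Write S_k := \sum_(j <= k) C(k, j)^r.  The left-hand side of the theorem is
   (2/(r+1) + \sum_(j < N) M(C(N, j+1), C(N, j)))^(1/r), where
   M(x, y) = (x^(r+1) - y^(r+1)) / ((r+1)(x - y)) is the mean value of t^r on
   the segment between x and y.  The proof has three ingredients:
   - Hermite-Hadamard for the convex function t^r:  M(x, y) <= (x^r + y^r)/2.
     We prove it with the mean value theorem, the derivative of the difference
     being nonnegative by the tangent-line (Bernoulli) inequality for t^r.
   - Telescoping: \sum_(j < N) (C(N, j+1)^r + C(N, j)^r)/2 = S_N - 1, so with
     2/(r+1) <= 1 the quantity under the r-th root is at most S_N.
   - Pascal's rule and midpoint convexity (a+b)^r <= 2^r (a^r+b^r)/2 give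
     S_(k+1) <= 2^r S_k, hence S_(m+n) <= 2^(rm) S_n. *)

Section PowerInequalities.
Context {R : realType}.

(* Bernoulli's inequality for a real exponent r > 1, derived from Young's
   inequality with the conjugate exponents r and r/(r-1). *)
Lemma bernoulli_powR (r a : R) : 1 < r -> 0 <= a -> 1 + r * (a - 1) <= a `^ r.
Proof.
move=> r_gt1 a_ge0.
have r_gt0 : 0 < r by apply: lt_trans r_gt1.
have r1_gt0 : 0 < r - 1 by rewrite subr_gt0.
have conj_r : r^-1 + (r / (r - 1))^-1 = 1.
  by rewrite invf_div; field; rewrite gt_eqF.
have := conjugate_powR a_ge0 ler01 r_gt0 (divr_gt0 r_gt0 r1_gt0) conj_r.
rewrite mulr1 powR1 mul1r invf_div => young.
have : r * a <= r * (a `^ r / r + (r - 1) / r) by rewrite ler_pM2l.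
by rewrite mulrDr !(mulrC r) !divfK ?gt_eqF //; lra.
Qed.

Lemma powR_tangent (r x b : R) : 1 < r -> 0 < x -> 0 <= b ->
  x `^ r + r * x `^ (r - 1) * (b - x) <= b `^ r.
Proof.
move=> r_gt1 x_gt0 b_ge0.
have xr_gt0 : 0 < x `^ r by rewrite powR_gt0.
have bx_ge0 : 0 <= b / x by apply: divr_ge0; last exact: ltW.
have := ler_wpM2r (ltW xr_gt0) (bernoulli_powR r (b / x) r_gt1 bx_ge0).
rewrite -powRM ?divr_ge0 ?(ltW x_gt0) // divfK ?gt_eqF //; apply: le_trans.
have -> : x `^ (r - 1) = x `^ r / x.
  by rewrite powRB ?powRr1 ?ltW // gt_eqF // implybT.
by rewrite mulrDl mul1r lerD2l le_eqVlt; apply/orP; left; apply/eqP; field;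
  rewrite gt_eqF.
Qed.

(* Hermite-Hadamard inequality for t^r on [b, a], with the integral of t^r
   computed explicitly: the mean of t^r over [b, a] is below the mean of the
   endpoint values.  F(x) below is the defect at the endpoint x; F(b) = 0 and
   F is nondecreasing because its derivative is a tangent-line defect. *)
Lemma hermite_hadamard_powR (r a b : R) : 1 < r -> 0 < b -> b <= a ->
  2 * (a `^ (r + 1) - b `^ (r + 1)) <= (r + 1) * (a - b) * (a `^ r + b `^ r).
Proof.
move=> r_gt1 b_gt0 ba.
pose F : R -> R := (cst (r + 1) * (id - cst b)) * (@powR R ^~ r + cst (b `^ r))
   - cst 2 * (@powR R ^~ (r + 1) - cst (b `^ (r + 1))).
pose dF (x : R) := (r + 1) * (r * x `^ (r - 1) * (x - b) - x `^ r + b `^ r).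
have derF (x : R) : 0 < x -> is_derive x (1 : R) F (dF x).
  move=> x_gt0; rewrite /F; apply: is_derive_eq.
    have der_r := is_derive1_powR r x_gt0.
    have der_r1 := is_derive1_powR (r + 1) x_gt0.
    by apply: is_deriveB; apply: is_deriveM.
  by rewrite /dF /= addrK /GRing.scale /= !fctE; ring.
have contF : {within `[b, a], continuous F}.
  apply: continuous_in_subspaceT => x; rewrite inE /= in_itv /= => /andP[bx _].
  apply: differentiable_continuous; apply/derivable1_diffP.
  by case: (derF x (lt_le_trans b_gt0 bx)).
have derF_open x : x \in `]b, a[ -> is_derive x 1 F (dF x).
  by rewrite in_itv /= => /andP[bx _]; apply: derF; apply: lt_trans bx.
have [c] := MVT_segment ba derF_open contF.
rewrite in_itv /= => /andP[bc _].
have tangent_c := powR_tangent r c b r_gt1 (lt_le_trans b_gt0 bc) (ltW b_gt0).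
rewrite /F /dF !fctE !subrr !mulr0 !mul0r subrr subr0 => mvt.
have dF_ge0 : 0 <= (r + 1) * (r * c `^ (r - 1) * (c - b) - c `^ r + b `^ r)
                 * (a - b).
  apply: mulr_ge0; last by rewrite subr_ge0.
  apply: mulr_ge0; first lra.
  have -> : r * c `^ (r - 1) * (c - b) = - (r * c `^ (r - 1) * (b - c)) by ring.
  lra.
by move: dF_ge0; rewrite -mvt; lra.
Qed.

Lemma powR_midpoint_convex (r a b : R) : 1 <= r -> 0 <= a -> 0 <= b ->
  (a + b) `^ r <= 2 `^ r * ((a `^ r + b `^ r) / 2).
Proof.
move=> r_ge1 a_ge0 b_ge0.
have half_ge0 : (0 : R) <= 2^-1 by rewrite invr_ge0.
have half_le1 : (2^-1 : R) <= 1 by rewrite invf_le1 ?ler1n.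
have := convex_powR r_ge1 (Itv01 half_ge0 half_le1) (x := a) (y := b).
rewrite !inE /= !in_itv /= !andbT => /(_ a_ge0 b_ge0).
rewrite !convRE /= /unstable.onem.
have -> : (1 - 2^-1 : R) = 2^-1 by field.
set c := conv _ _ _ => convex_c.
have Ec : c = 2^-1 * a + 2^-1 * b.
  rewrite /c; apply: etrans (convRE _ _ _) _; rewrite /= /unstable.onem.
  by congr (_ + _ * _); field.
have -> : a + b = 2 * c by rewrite Ec; field.
rewrite powRM ?ler0n // ?Ec ?addr_ge0 ?mulr_ge0 //.
rewrite ler_pM2l ?powR_gt0 ?ltr0n // -?Ec.
by apply: le_trans convex_c _; lra.
Qed.

End PowerInequalities.

(* The mean value of t^r over the segment between x and y (0 if x = y). *)
Definition powR_mean {R : realType} (r x y : R) : R :=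
  (x `^ (r + 1) - y `^ (r + 1)) / ((r + 1) * (x - y)).

Lemma powR_meanC {R : realType} (r x y : R) : powR_mean r x y = powR_mean r y x.
Proof.
by rewrite /powR_mean -[y - x]opprB -[y `^ _ - _]opprB mulrN invrN mulrNN.
Qed.

Lemma powR_mean_bound {R : realType} (r x y : R) : 1 < r -> 0 < x -> 0 < y ->
  0 <= powR_mean r x y <= (x `^ r + y `^ r) / 2.
Proof.
move=> r_gt1.
wlog yx : x y / y <= x => [hwlog x_gt0 y_gt0|x_gt0 y_gt0].
  case: (lerP y x) => [|/ltW] yx; first exact: hwlog.
  by rewrite powR_meanC addrC; apply: hwlog.
case: (eqVneq y x) => [->|yx_neq].
  by rewrite /powR_mean !subrr mul0r lexx divr_ge0 // addr_ge0 // powR_ge0.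
have den_gt0 : 0 < (r + 1) * (x - y).
  by rewrite mulr_gt0 ?subr_gt0 ?lt_neqAle ?yx_neq //; lra.
apply/andP; split.
  rewrite divr_ge0 ?(ltW den_gt0) // subr_ge0 ge0_ler_powR ?nnegrE ?ltW //; lra.
rewrite /powR_mean ler_pdivrMr //.
have -> : (x `^ r + y `^ r) / 2 * ((r + 1) * (x - y)) =
          ((r + 1) * (x - y) * (x `^ r + y `^ r)) / 2 by field.
have := hermite_hadamard_powR r x y r_gt1 y_gt0 yx.
by rewrite ler_pdivlMr //; lra.
Qed.

Definition binom_power_sum {R : realType} (r : R) (k : nat) : R :=
  \sum_(j < k.+1) ('C(k, j))%:R `^ r.

Lemma binom_power_sum_ge0 {R : realType} (r : R) (k : nat) :
  0 <= binom_power_sum r k.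
Proof. by apply: sumr_ge0 => j _; apply: powR_ge0. Qed.

(* Averaging consecutive entries of row k telescopes: both the sum of the
   left entries and the sum of the right entries miss exactly one extreme 1. *)
Lemma binom_power_sum_avg {R : realType} (r : R) (k : nat) :
  \sum_(j < k) ((('C(k, j.+1))%:R `^ r + ('C(k, j))%:R `^ r) / 2)
    = binom_power_sum r k - 1.
Proof.
rewrite -mulr_suml big_split /=.
have -> : \sum_(j < k) ('C(k, j.+1))%:R `^ r = binom_power_sum r k - 1.
  by rewrite /binom_power_sum big_ord_recl /= bin0 powR1 [1 + _]addrC addrK.
have -> : \sum_(j < k) ('C(k, j))%:R `^ r = binom_power_sum r k - 1.
  by rewrite /binom_power_sum big_ord_recr /= binn powR1 addrK.
by field.
Qed.

(* One step down Pascal's triangle multiplies the power sum by at most 2^r: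
   the interior entries C(k, j+1) + C(k, j) are handled by midpoint convexity,
   and the two extreme entries 1 by 2 <= 2^r. *)
Lemma binom_power_sum_step {R : realType} (r : R) (k : nat) : 1 <= r ->
  binom_power_sum r k.+1 <= 2 `^ r * binom_power_sum r k.
Proof.
move=> r_ge1.
have two_le : 2 <= 2 `^ r.
  by have := @ler_powR R 2 (ler1n _ _) 1 r r_ge1; rewrite powRr1 ?ler0n.
have pascal : binom_power_sum r k.+1 =
    2 + \sum_(j < k) (('C(k, j.+1))%:R + ('C(k, j))%:R) `^ r.
  rewrite /binom_power_sum big_ord_recr big_ord_recl /= bin0 binn !powR1.
  rewrite addrC addrA; congr (_ + _).
  by apply: eq_bigr => j _; rewrite /bump /= binS natrD.
have interior : \sum_(j < k) (('C(k, j.+1))%:R + ('C(k, j))%:R) `^ r <=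
    2 `^ r * (binom_power_sum r k - 1).
  rewrite -binom_power_sum_avg mulr_sumr.
  by apply: ler_sum => j _; apply: powR_midpoint_convex; rewrite ?ler0n.
by rewrite pascal; move: interior; rewrite mulrBr mulr1; lra.
Qed.

Lemma binom_power_sum_shift {R : realType} (r : R) (m n : nat) : 1 <= r ->
  binom_power_sum r (m + n) <= (2 ^+ m) `^ r * binom_power_sum r n.
Proof.
move=> r_ge1; elim: m => [|m IH]; first by rewrite add0n expr0 powR1 mul1r.
rewrite addSn; apply: le_trans (binom_power_sum_step r (m + n) r_ge1) _.
by rewrite exprS powRM ?ler0n ?exprn_ge0 // -mulrA ler_pM2l ?powR_gt0 ?ltr0n.
Qed.

Lemma mean_sum_bound {R : realType} (r : R) (N : nat) : 1 < r ->
  let X := 2 / (r + 1) +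
    \sum_(j < N) powR_mean r ('C(N, j.+1))%:R ('C(N, j))%:R in
  0 <= X <= binom_power_sum r N.
Proof.
move=> r_gt1 /=.
have binom_gt0 i : (i <= N)%N -> (0 : R) < ('C(N, i))%:R.
  by move=> iN; rewrite ltr0n bin_gt0.
have mean_bound (j : 'I_N) := powR_mean_bound r _ _ r_gt1
  (binom_gt0 _ (ltn_ord j)) (binom_gt0 _ (ltnW (ltn_ord j))).
apply/andP; split.
  apply: addr_ge0; first by apply: divr_ge0; lra.
  by apply: sumr_ge0 => j _; case/andP: (mean_bound j).
have : 2 / (r + 1) <= 1 by rewrite ler_pdivrMr ?mul1r; lra.
suff : \sum_(j < N) powR_mean r ('C(N, j.+1))%:R ('C(N, j))%:R
       <= binom_power_sum r N - 1 by lra.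
rewrite -binom_power_sum_avg; apply: ler_sum => j _.
by case/andP: (mean_bound j).
Qed.

Theorem mainTheorem10 (R : realType) (m n : nat) (r : R)
    (hmn : (m = n %[mod 2])%N) (hr : 1 < r) :
  let N := (m + n)%N in
  (2 / (r + 1) +
     \sum_(j < N)
        ((('C(N, j.+1))%:R `^ (r + 1) - ('C(N, j))%:R `^ (r + 1)) /
         ((r + 1) * (('C(N, j.+1))%:R - ('C(N, j))%:R)))) `^ (r^-1)
  <= 2 ^+ m * (\sum_(j < n.+1) ('C(n, j))%:R `^ r) `^ (r^-1).
Proof.
cbv zeta; have /andP[X_ge0 X_le] := mean_sum_bound r (m + n) hr.
have r_gt0 : 0 < r by apply: lt_trans hr.
have rinv_ge0 : 0 <= r^-1 by rewrite invr_ge0 ltW.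
apply: le_trans (ge0_ler_powR rinv_ge0 X_ge0 _ X_le) _;
  first exact: binom_power_sum_ge0.
have shift := binom_power_sum_shift r m n (ltW hr).
apply: le_trans (ge0_ler_powR rinv_ge0 _ _ shift) _;
  rewrite ?nnegrE ?mulr_ge0 ?powR_ge0 ?binom_power_sum_ge0 //.
rewrite powRM ?powR_ge0 ?binom_power_sum_ge0 // -powRrM mulfV ?gt_eqF //.
by rewrite powRr1 ?exprn_ge0.
Qed.
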